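(* Let $V_1,V_2$ be symplectic spaces over $\mathbb F_q$ and $V_1\times V_2$ their product with symplectic form $\omega_1\oplus\omega_2$. Let $r:H(V_1)\times H(V_2)\to H(V_1\times V_2)$, $r((v_1,z_1),(v_2,z_2))=((v_1,v_2),z_1+z_2)$, and $s:OLag(V_1)\times OLag(V_2)\to OLag(V_1\times V_2)$, $s(L_1^\circ,L_2^\circ)=(L_1\times L_2,o_{L_1}\wedge o_{L_2})$ (using $\bigwedge^{top}(L_1\times L_2)\cong\bigwedge^{top}L_1\otimes\bigwedge^{top}L_2$, $a\otimes b\mapsto a\wedge b$). For $(L_1^\circ,L_2^\circ)$ let $r^*_{(L_1^\circ,L_2^\circ)}:\mathcal H_{s(L_1^\circ,L_2^\circ)}(V_1\times V_2)\to\mathcal H_{L_1^\circ}(V_1)\otimes\mathcal H_{L_2^\circ}(V_2)$ be $g\mapsto g\circ r$ (functions on $H(V_1)\times H(V_2)$ being identified with the tensor product of function spaces). Then for all $(L_1^\circ,L_2^\circ),(M_1^\circ,M_2^\circ)\in OLag(V_1)\times OLag(V_2)$, $$\big(T^{V_1}_{M_1^\circ,L_1^\circ}\otimes T^{V_2}_{M_2^\circ,L_2^\circ}\big)\circ r^*_{(L_1^\circ,L_2^\circ)}=r^*_{(M_1^\circ,M_2^\circ)}\circ T^{V_1\times V_2}_{s(M_1^\circ,M_2^\circ),\,s(L_1^\circ,L_2^\circ)}.$$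
   Context: $q$ is a power of an odd prime. For a symplectic space $(V,\omega)$ of dimension $2n$ over $\mathbb F_q$: $H(V)$ is $V\times\mathbb F_q$ with $(v,z)(v',z')=(v+v',z+z'+\tfrac12\omega(v,v'))$; $\psi$ is a fixed non-trivial character of $\mathbb F_q$ (the same for all spaces); an oriented Lagrangian is $L^\circ=(L,o_L)$ with $L$ Lagrangian and $o_L\in\bigwedge^nL$ nonzero, $OLag(V)$ their set; $\mathcal H_{L^\circ}(V)$ is the space of $f:H(V)\to\mathbb C$ with $f((0,z)(l,0)h)=\psi(z)f(h)$ ($z\in\mathbb F_q,l\in L,h\in H(V)$), with $H(V)$ acting by right translation. $\omega_\wedge(a_1\wedge\dots\wedge a_n,b_1\wedge\dots\wedge b_n)=(-1)^{n(n-1)/2}\det(\omega(a_i,b_j))$; $\sigma$ the Legendre character; $G_1=\sum_z\psi(\tfrac12z^2)$. For $M+L=V$ set $T^0_{M^\circ,L^\circ}f(h)=(G_1/q)^n\sigma((-1)^{n(n-1)/2}\omega_\wedge(o_L,o_M))\sum_{m\in M}f((m,0)h)$. The canonical trivialization $T^V$ is the unique family of $H(V)$-intertwining isomorphisms $T^V_{M^\circ,L^\circ}:\mathcal H_{L^\circ}(V)\to\mathcal H_{M^\circ}(V)$, $(M^\circ,L^\circ)\in OLag(V)^2$, with $T^V_{N^\circ,M^\circ}T^V_{M^\circ,L^\circ}=T^V_{N^\circ,L^\circ}$ always and $T^V=T^0$ on pairs in general position. *)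

From HB Require Import structures.
From mathcomp Require Import all_boot all_order all_algebra all_field.
Set Implicit Arguments. Unset Strict Implicit. Unset Printing Implicit Defensive.
Import Order.TTheory GRing.Theory Num.Theory.
Local Open Scope ring_scope.

Section Weil.
Variable F : finFieldType.

(* A symplectic space of dimension d is modelled as 'rV[F]_d with the form
   omega B u v = u B v^T, for an alternating non-degenerate matrix B. *)
Definition omega d (B : 'M[F]_d) (u v : 'rV[F]_d) : F := (u *m B *m v^T) 0 0.

Definition symplectic d (B : 'M[F]_d) : Prop :=
  (forall v, omega B v v = 0) /\ B \in unitmx.

Definition heis d := ('rV[F]_d * F)%type.

Definition hmul d (B : 'M[F]_d) (h h' : heis d) : heis d :=
  (h.1 + h'.1, h.2 + h'.2 + 2%:R^-1 * omega B h.1 h'.1).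

(* An oriented Lagrangian L° = (L, a_1 /\ ... /\ a_n) is represented by an
   ordered basis (a_1,...,a_n) of L; L = row space of lagmx. *)
Definition lagmx d n (L : n.-tuple 'rV[F]_d) : 'M[F]_(n, d) :=
  \matrix_(i < n) tnth L i.

Definition in_lag d n (L : n.-tuple 'rV[F]_d) (v : 'rV[F]_d) : bool :=
  (v <= lagmx L)%MS.

Definition is_olag d n (B : 'M[F]_d) (L : n.-tuple 'rV[F]_d) : Prop :=
  [/\ n.*2 = d, row_free (lagmx L) &
      forall i j, omega B (tnth L i) (tnth L j) = 0].

Definition Hspace d n (B : 'M[F]_d) (psi : F -> algC) (L : n.-tuple 'rV[F]_d)
  (f : heis d -> algC) : Prop :=
  forall (z : F) (l : 'rV[F]_d) (h : heis d), in_lag L l ->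
    f (hmul B (hmul B (0, z) (l, 0)) h) = psi z * f h.

Definition omega_wedge d n (B : 'M[F]_d) (L M : n.-tuple 'rV[F]_d) : F :=
  (-1) ^+ (n * n.-1)./2 *
  \det (\matrix_(i < n, j < n) omega B (tnth L i) (tnth M j)).

Definition legendre (x : F) : algC :=
  if x == 0 then 0 else if [exists y : F, y * y == x] then 1 else -1.

Definition G1 (psi : F -> algC) : algC := \sum_(z : F) psi (2%:R^-1 * z ^+ 2).

Definition T0 d n (B : 'M[F]_d) (psi : F -> algC) (M L : n.-tuple 'rV[F]_d)
  (f : heis d -> algC) : heis d -> algC :=
  fun h => (G1 psi / #|F|%:R) ^+ n *
    legendre ((-1) ^+ (n * n.-1)./2 * omega_wedge B L M) *
    \sum_(m : 'rV[F]_d | in_lag M m) f (hmul B (m, 0) h).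

Definition gen_pos d n (M L : n.-tuple 'rV[F]_d) : bool :=
  row_full (col_mx (lagmx M) (lagmx L)).

Definition canonical_triv d n (B : 'M[F]_d) (psi : F -> algC)
  (T : n.-tuple 'rV[F]_d -> n.-tuple 'rV[F]_d ->
       (heis d -> algC) -> (heis d -> algC)) : Prop :=
  forall M L, is_olag B M -> is_olag B L ->
  (
      forall f, Hspace B psi L f -> Hspace B psi M (T M L f)) /\
      (forall (a : algC) f g, Hspace B psi L f -> Hspace B psi L g ->
        T M L (fun h => a * f h + g h) = (fun h => a * T M L f h + T M L g h)) /\
      (forall f g, Hspace B psi L f -> Hspace B psi L g ->
        T M L f = T M L g -> f = g) /\
      (forall g, Hspace B psi M g -> exists2 f, Hspace B psi L f & T M L f = g) /\
      (forall h0 f, Hspace B psi L f ->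
        T M L (fun h => f (hmul B h h0)) = (fun h => T M L f (hmul B h h0))) /\
      (forall N f, is_olag B N -> Hspace B psi L f ->
        T N M (T M L f) = T N L f) /\
      (forall f, gen_pos M L -> Hspace B psi L f -> T M L f = T0 B psi M L f).

Definition prod_form d1 d2 (B1 : 'M[F]_d1) (B2 : 'M[F]_d2) : 'M[F]_(d1 + d2) :=
  block_mx B1 0 0 B2.

Definition rmap d1 d2 (h1 : heis d1) (h2 : heis d2) : heis (d1 + d2) :=
  (row_mx h1.1 h2.1, h1.2 + h2.2).

Definition smap d1 d2 n1 n2 (L1 : n1.-tuple 'rV[F]_d1) (L2 : n2.-tuple 'rV[F]_d2)
  : (n1 + n2).-tuple 'rV[F]_(d1 + d2) :=
  cat_tuple (map_tuple (fun v => row_mx v (0 : 'rV[F]_d2)) L1)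
            (map_tuple (fun v => row_mx (0 : 'rV[F]_d1) v) L2).

(* r^*, with functions on H(V1) x H(V2) identified with H_{L1} (x) H_{L2} *)
Definition rstar d1 d2 (g : heis (d1 + d2) -> algC) : heis d1 -> heis d2 -> algC :=
  fun h1 h2 => g (rmap h1 h2).

Definition tensT d1 d2 (A1 : (heis d1 -> algC) -> heis d1 -> algC)
  (A2 : (heis d2 -> algC) -> heis d2 -> algC) (Phi : heis d1 -> heis d2 -> algC)
  : heis d1 -> heis d2 -> algC :=
  fun h1 h2 => A1 (fun h1' => A2 (Phi h1') h2) h1.

End Weil.

From HB Require Import structures.
From mathcomp Require Import all_boot all_order all_algebra all_field zify.
From Stdlib Require Import FunctionalExtensionality.
Import GRing.Theory Num.Theory.
Local Open Scope ring_scope.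

(* By the cocycle identity, T_{M,L} = T^0_{M,N} T^0_{N,L} for any Lagrangian N
   transverse to both L and M.  We pick such common transversals N1 of
   (L1, M1) and N2 of (L2, M2); then N1 x N2 is a common transversal of
   L1 x L2 and M1 x M2, so both sides of the theorem become composites of the
   explicit operators T^0.  The operator T^0 on V1 x V2 factors as the tensor
   product of the T^0's on V1 and V2: the sum over M1 x M2 is a double sum,
   the Gram matrix of the two product Lagrangians is block diagonal, and the
   Legendre symbol of the product of the two block determinants splits
   because N1 and N2 are oriented so that one of the determinants is a square. *)

Section LinearAlgebra.
Local Set Implicit Arguments.
Local Unset Strict Implicit.
Context {K : fieldType}.

Lemma mxrank_unit_mull d m (U : 'M[K]_d) (Y : 'M[K]_(d, m)) :
  U \in unitmx -> \rank (U *m Y) = \rank Y.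
Proof.
move=> hU; rewrite -mxrank_tr trmx_mul mxrankMfree ?mxrank_tr //.
by rewrite row_free_unit unitmx_tr.
Qed.

Lemma mxrank_adds_row d m (v : 'rV[K]_d) (A : 'M[K]_(m, d)) :
  ~~ (v <= A)%MS -> \rank (v + A)%MS = (\rank A).+1.
Proof.
move=> nvA; have v0 : v != 0 by apply: contraNneq nvA => ->; rewrite sub0mx.
have cap0 : \rank (v :&: A)%MS = 0%N.
  apply/eqP; apply: contraNT nvA => cap_nz.
  have le1 := mxrankS (capmxSl v A); rewrite rank_rV v0 in le1.
  have v_cap : (v <= v :&: A)%MS.
    by rewrite -(mxrank_leqif_sup (capmxSl v A)).2 rank_rV v0 eqn_leq le1 lt0n.
  exact: submx_trans v_cap (capmxSr _ _).
by have := mxrank_sum_cap v A; rewrite rank_rV v0 cap0 addn0 add1n.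
Qed.

Lemma avoid_two_subspaces m k1 k2 d (W : 'M[K]_(m, d))
    (U1 : 'M[K]_(k1, d)) (U2 : 'M[K]_(k2, d)) :
  ~~ (W <= U1)%MS -> ~~ (W <= U2)%MS ->
  exists v : 'rV[K]_d, [/\ (v <= W)%MS, ~~ (v <= U1)%MS & ~~ (v <= U2)%MS].
Proof.
move=> /row_subPn[i aU1] /row_subPn[j bU2].
set a := row i W in aU1 *; set b := row j W in bU2 *.
have [aU2|] := boolP (a <= U2)%MS; last by exists a; rewrite row_sub.
have [bU1|] := boolP (b <= U1)%MS; last by exists b; rewrite row_sub.
exists (a + b); split; first by rewrite addmx_sub ?row_sub.
  by apply: contraNN aU1 => abU1; rewrite -(addrK b a) addmx_sub ?eqmx_opp.
by apply: contraNN bU2 => abU2; rewrite -(addKr a b) addmx_sub ?eqmx_opp.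
Qed.

End LinearAlgebra.

Section SymplecticForms.
Local Set Implicit Arguments.
Local Unset Strict Implicit.
Context {F : finFieldType}.

Lemma omega_rows d m p (A : 'M[F]_(m, d)) (B : 'M[F]_d) (C : 'M[F]_(p, d)) i j :
  (A *m B *m C^T) i j = omega B (row i A) (row j C).
Proof.
rewrite /omega !mxE; apply: eq_bigr => k _; rewrite !mxE.
by congr (_ * _); apply: eq_bigr => l _; rewrite !mxE.
Qed.

Lemma omegaDl d (B : 'M[F]_d) u w x : omega B (u + w) x = omega B u x + omega B w x.
Proof. by rewrite /omega !mulmxDl mxE. Qed.

Lemma omegaDr d (B : 'M[F]_d) u w x : omega B x (u + w) = omega B x u + omega B x w.
Proof. by rewrite /omega linearD /= mulmxDr mxE. Qed.

Lemma omega_skew d (B : 'M[F]_d) u w :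
  (forall v, omega B v v = 0) -> omega B u w = - omega B w u.
Proof.
move=> alt; apply/eqP; rewrite -addr_eq0; apply/eqP.
by have := alt (u + w); rewrite !omegaDl !omegaDr !alt add0r addr0.
Qed.

Lemma lagmx_row d n (L : n.-tuple 'rV[F]_d) i : row i (lagmx L) = tnth L i.
Proof. by rewrite rowK. Qed.

Definition gram d n (B : 'M[F]_d) (L M : n.-tuple 'rV[F]_d) : 'M[F]_n :=
  lagmx L *m B *m (lagmx M)^T.

(* The sign in the definition of T^0 cancels the sign in omega_wedge, so the
   Legendre factor of T^0_{M,L} is that of the Gram determinant of (L, M). *)
Lemma legendre_omega_wedge d n (B : 'M[F]_d) (L M : n.-tuple 'rV[F]_d) :
  legendre ((-1) ^+ (n * n.-1)./2 * omega_wedge B L M) =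
  legendre (\det (gram B L M)).
Proof.
rewrite /omega_wedge.
have -> : \matrix_(i, j) omega B (tnth L i) (tnth M j) = gram B L M.
  by apply/matrixP => i j; rewrite omega_rows !lagmx_row mxE.
by rewrite mulrA -exprMn mulrNN mulr1 expr1n mul1r.
Qed.

Lemma gram_olag d n (B : 'M[F]_d) (L : n.-tuple 'rV[F]_d) :
  is_olag B L -> gram B L L = 0.
Proof. by case=> _ _ iso; apply/matrixP => i j; rewrite omega_rows !lagmx_row iso mxE. Qed.

Lemma hmul0l d (B : 'M[F]_d) (h : heis F d) : hmul B (0, 0) h = h.
Proof. by case: h => v z; rewrite /hmul /omega /= !mul0mx mxE mulr0 !add0r addr0. Qed.

End SymplecticForms.

Section ExplicitOperators.
Local Set Implicit Arguments.
Local Unset Strict Implicit.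
Context {F : finFieldType}.

Definition sq (x : F) : Prop := exists s, s * s = x.

(* The Legendre symbol is multiplicative as soon as one factor is a square;
   this special case of multiplicativity is all the theorem requires. *)
Lemma legendreM_sq (x y : F) : sq x -> legendre (x * y) = legendre x * legendre y.
Proof.
case=> s <-; rewrite /legendre; have [->|s0] := eqVneq s 0.
  by rewrite !mul0r eqxx mul0r.
have ss0 : s * s != 0 by rewrite mulf_neq0.
have sq_ss : [exists y0, y0 * y0 == s * s] by apply/existsP; exists s.
rewrite (negbTE ss0) mulf_eq0 (negbTE ss0) sq_ss mul1r /=.
case: (y == 0) => //; congr (if _ then _ else _).
apply/existsP/existsP => [[w /eqP hw]|[w /eqP hw]]; last first.
  by exists (s * w); rewrite mulrACA hw.
exists (w / s); apply/eqP; apply: (mulfI ss0).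
by rewrite -hw mulrACA [s * (w / s)]mulrC divfK.
Qed.

Lemma legendreM_sq_or (x y : F) :
  sq x \/ sq y -> legendre (x * y) = legendre x * legendre y.
Proof. by case=> [/legendreM_sq //|/legendreM_sq hy]; rewrite mulrC hy mulrC. Qed.

Lemma T0_scale d n (B : 'M[F]_d) psi (M L : n.-tuple 'rV[F]_d) (c : algC) f :
  T0 B psi M L (fun h => c * f h) = fun h => c * T0 B psi M L f h.
Proof. by apply: functional_extensionality => h; rewrite /T0 -mulr_sumr mulrCA. Qed.

Lemma T_factor d n (B : 'M[F]_d) psi
    (T : n.-tuple 'rV[F]_d -> n.-tuple 'rV[F]_d -> (heis F d -> algC) -> heis F d -> algC)
    M N L f :
  canonical_triv B psi T -> is_olag B M -> is_olag B N -> is_olag B L ->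
  gen_pos M N -> gen_pos N L -> Hspace B psi L f ->
  T M L f = T0 B psi M N (T0 B psi N L f).
Proof.
move=> hT hM hN hL gMN gNL hf.
have [mapNL [_ [_ [_ [_ [cocycleNL T0NL]]]]]] := hT N L hN hL.
have [_ [_ [_ [_ [_ [_ T0MN]]]]]] := hT M N hM hN.
rewrite -(cocycleNL M f hM hf) T0MN //; last exact: mapNL.
by rewrite T0NL.
Qed.

End ExplicitOperators.

Section Products.
Local Set Implicit Arguments.
Local Unset Strict Implicit.
Context {F : finFieldType} {d1 d2 : nat}.
Variables (B1 : 'M[F]_d1) (B2 : 'M[F]_d2).
Local Notation B12 := (prod_form B1 B2).

Lemma omega_prod a1 a2 b1 b2 :
  omega B12 (row_mx a1 a2) (row_mx b1 b2) = omega B1 a1 b1 + omega B2 a2 b2.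
Proof.
rewrite /omega /prod_form mul_row_block !mulmx0 addr0 add0r tr_row_mx.
by rewrite mul_row_col mxE.
Qed.

Lemma hmul_rmap (a1 b1 : heis F d1) (a2 b2 : heis F d2) :
  hmul B12 (rmap a1 a2) (rmap b1 b2) = rmap (hmul B1 a1 b1) (hmul B2 a2 b2).
Proof.
rewrite /hmul /rmap /= omega_prod add_row_mx mulrDr; congr (_, _).
by rewrite (addrACA a1.2 a2.2); exact: addrACA.
Qed.

Lemma rmap_row_mx (a1 : 'rV[F]_d1) (a2 : 'rV[F]_d2) :
  ((row_mx a1 a2, 0) : heis F (d1 + d2)) = rmap (a1, 0) (a2, 0).
Proof. by rewrite /rmap addr0. Qed.

Lemma lagmx_smap n1 n2 (L1 : n1.-tuple 'rV[F]_d1) (L2 : n2.-tuple 'rV[F]_d2) :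
  lagmx (smap L1 L2) = block_mx (lagmx L1) 0 0 (lagmx L2).
Proof.
apply/row_matrixP => i; rewrite lagmx_row block_mxEv -[i]splitK.
case: (split i) => [i1|i2] /=.
  by rewrite rowKu row_row_mx row0 lagmx_row /smap tnth_lshift tnth_map.
by rewrite rowKd row_row_mx row0 lagmx_row /smap tnth_rshift tnth_map.
Qed.

Lemma in_lag_smap n1 n2 (L1 : n1.-tuple 'rV[F]_d1) (L2 : n2.-tuple 'rV[F]_d2) a1 a2 :
  in_lag (smap L1 L2) (row_mx a1 a2) = in_lag L1 a1 && in_lag L2 a2.
Proof.
rewrite /in_lag lagmx_smap; apply/idP/andP.
  case/submxP => w; rewrite -[w]hsubmxK mul_row_block !mulmx0 addr0 add0r.
  by case/eq_row_mx => -> ->; rewrite !submxMl.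
case=> /submxP[x ->] /submxP[y ->]; apply/submxP; exists (row_mx x y).
by rewrite mul_row_block !mulmx0 addr0 add0r.
Qed.

Lemma sum_smap n1 n2 (M1 : n1.-tuple 'rV[F]_d1) (M2 : n2.-tuple 'rV[F]_d2)
    (Phi : 'rV[F]_(d1 + d2) -> algC) :
  \sum_(m | in_lag (smap M1 M2) m) Phi m =
  \sum_(m1 | in_lag M1 m1) \sum_(m2 | in_lag M2 m2) Phi (row_mx m1 m2).
Proof.
rewrite pair_big_dep /= (reindex (fun p => row_mx p.1 p.2)) /=.
  by apply: eq_bigl => p; rewrite in_lag_smap.
exists (fun m => (lsubmx m, rsubmx m)) => [[p1 p2] _|m _] /=.
  by rewrite row_mxKl row_mxKr.
by rewrite hsubmxK.
Qed.

Lemma gram_smap n1 n2 (L1 M1 : n1.-tuple 'rV[F]_d1) (L2 M2 : n2.-tuple 'rV[F]_d2) :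
  gram B12 (smap L1 L2) (smap M1 M2) = block_mx (gram B1 L1 M1) 0 0 (gram B2 L2 M2).
Proof.
rewrite /gram !lagmx_smap /prod_form tr_block_mx !trmx0 !mulmx_block.
by rewrite ?(mulmx0, mul0mx, addr0, add0r).
Qed.

Lemma olag_smap n1 n2 (L1 : n1.-tuple 'rV[F]_d1) (L2 : n2.-tuple 'rV[F]_d2) :
  is_olag B1 L1 -> is_olag B2 L2 -> is_olag B12 (smap L1 L2).
Proof.
move=> hL1 hL2; have iso1 := gram_olag hL1; have iso2 := gram_olag hL2.
case: hL1 hL2 => [dim1 free1 _] [dim2 free2 _]; split.
- by rewrite doubleD dim1 dim2.
- by rewrite /row_free lagmx_smap rank_diag_block_mx (eqP free1) (eqP free2).
move=> i j; rewrite -!lagmx_row -omega_rows.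
by rewrite -[_ *m _ *m _]/(gram _ _ _) gram_smap iso1 iso2 block_mx0 mxE.
Qed.

Lemma gen_pos_smap n1 n2 (M1 L1 : n1.-tuple 'rV[F]_d1) (M2 L2 : n2.-tuple 'rV[F]_d2) :
  gen_pos M1 L1 -> gen_pos M2 L2 -> gen_pos (smap M1 M2) (smap L1 L2).
Proof.
rewrite /gen_pos -!sub1mx -!addsmxE => full1 full2; apply/row_subP => i.
set v := row i 1%:M; rewrite -[v]hsubmxK.
have /sub_addsmxP[u1 ->] := submx_trans (submx1 (lsubmx v)) full1.
have /sub_addsmxP[u2 ->] := submx_trans (submx1 (rsubmx v)) full2.
rewrite -add_row_mx; apply: addmx_sub_adds;
  by rewrite -[(row_mx _ _ <= _)%MS]/(in_lag _ _) in_lag_smap /in_lag !submxMl.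
Qed.


Variable psi : F -> algC.

Lemma hmul_translate_rmap z1 z2 l1 l2 (h1 : heis F d1) (h2 : heis F d2) :
  hmul B12 (hmul B12 (0, z1 + z2) (row_mx l1 l2, 0)) (rmap h1 h2) =
  rmap (hmul B1 (hmul B1 (0, z1) (l1, 0)) h1) (hmul B2 (hmul B2 (0, z2) (l2, 0)) h2).
Proof.
have -> : ((0, z1 + z2) : heis F (d1 + d2)) = rmap (0, z1) (0, z2).
  by rewrite /rmap row_mx0.
by rewrite rmap_row_mx !hmul_rmap.
Qed.

Lemma Hspace_slice2 n1 n2 (L1 : n1.-tuple 'rV[F]_d1) (L2 : n2.-tuple 'rV[F]_d2) g h1 :
  Hspace B12 psi (smap L1 L2) g -> Hspace B2 psi L2 (rstar g h1).
Proof.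
move=> hg z l h2 hl; have := hg (0 + z) (row_mx 0 l) (rmap h1 h2).
by rewrite hmul_translate_rmap !hmul0l add0r in_lag_smap hl /in_lag sub0mx; apply.
Qed.

Lemma Hspace_slice1 n1 n2 (L1 : n1.-tuple 'rV[F]_d1) (L2 : n2.-tuple 'rV[F]_d2) g z l h1 :
  Hspace B12 psi (smap L1 L2) g -> in_lag L1 l ->
  rstar g (hmul B1 (hmul B1 (0, z) (l, 0)) h1) = fun h2 => psi z * rstar g h1 h2.
Proof.
move=> hg hl; apply: functional_extensionality => h2.
have := hg (z + 0) (row_mx l 0) (rmap h1 h2).
by rewrite hmul_translate_rmap !hmul0l addr0 in_lag_smap hl /in_lag sub0mx; apply.
Qed.

Lemma T0_comm n1 n2 (M1 L1 : n1.-tuple 'rV[F]_d1) (M2 L2 : n2.-tuple 'rV[F]_d2)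
    (X : heis F d1 -> heis F d2 -> algC) h1 h2 :
  T0 B1 psi M1 L1 (fun a => T0 B2 psi M2 L2 (X a) h2) h1 =
  T0 B2 psi M2 L2 (fun b => T0 B1 psi M1 L1 (X^~ b) h1) h2.
Proof.
rewrite /T0 !mulr_sumr.
under eq_bigr do rewrite !mulr_sumr.
under [RHS]eq_bigr do rewrite !mulr_sumr.
by rewrite exchange_big; apply: eq_bigr => m2 _; apply: eq_bigr => m1 _; exact: mulrCA.
Qed.

Lemma T0_smap n1 n2 (M1 L1 : n1.-tuple 'rV[F]_d1) (M2 L2 : n2.-tuple 'rV[F]_d2) G :
  sq (\det (gram B1 L1 M1)) \/ sq (\det (gram B2 L2 M2)) ->
  rstar (T0 B12 psi (smap M1 M2) (smap L1 L2) G) =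
  tensT (T0 B1 psi M1 L1) (T0 B2 psi M2 L2) (rstar G).
Proof.
move=> split_sq; apply: functional_extensionality => h1.
apply: functional_extensionality => h2.
rewrite /rstar /tensT /T0 !legendre_omega_wedge gram_smap det_ublock.
rewrite legendreM_sq_or // sum_smap.
under eq_bigr do under eq_bigr do rewrite rmap_row_mx hmul_rmap.
by rewrite -mulr_sumr exprD mulrACA -!mulrA.
Qed.

Lemma tensT_T0_comp n1 n2 (M1 N1 L1 : n1.-tuple 'rV[F]_d1) (M2 N2 L2 : n2.-tuple 'rV[F]_d2)
    (X : heis F d1 -> heis F d2 -> algC) :
  tensT (fun f => T0 B1 psi M1 N1 (T0 B1 psi N1 L1 f))
        (fun f => T0 B2 psi M2 N2 (T0 B2 psi N2 L2 f)) X =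
  tensT (T0 B1 psi M1 N1) (T0 B2 psi M2 N2) (tensT (T0 B1 psi N1 L1) (T0 B2 psi N2 L2) X).
Proof.
apply: functional_extensionality => h1; apply: functional_extensionality => h2.
rewrite /tensT; congr (T0 B1 psi M1 N1 _ h1); apply: functional_extensionality => a.
exact: T0_comm.
Qed.

Lemma tensT_rstar_ext n1 n2 (L1 : n1.-tuple 'rV[F]_d1) (L2 : n2.-tuple 'rV[F]_d2)
    (A1 A1' : (heis F d1 -> algC) -> heis F d1 -> algC)
    (A2 A2' : (heis F d2 -> algC) -> heis F d2 -> algC) g :
  Hspace B12 psi (smap L1 L2) g ->
  (forall f, Hspace B1 psi L1 f -> A1 f = A1' f) ->
  (forall f, Hspace B2 psi L2 f -> A2 f = A2' f) ->
  (forall c f, A2' (fun h => c * f h) = fun h => c * A2' f h) ->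
  tensT A1 A2 (rstar g) = tensT A1' A2' (rstar g).
Proof.
move=> hg eqA1 eqA2 A2'_scale.
apply: functional_extensionality => h1; apply: functional_extensionality => h2.
rewrite /tensT.
have -> : (fun a => A2 (rstar g a) h2) = (fun a => A2' (rstar g a) h2).
  by apply: functional_extensionality => a; rewrite eqA2 //; exact: Hspace_slice2 hg.
rewrite eqA1 // => z l h hl.
by rewrite (Hspace_slice1 z h hg hl) A2'_scale.
Qed.

End Products.

Section CommonTransversal.
Local Set Implicit Arguments.
Local Unset Strict Implicit.
Context {F : finFieldType} {d : nat}.
Variable B : 'M[F]_d.
Hypothesis alt : forall v, omega B v v = 0.
Hypothesis B_unit : B \in unitmx.

Definition sperp m (S : 'M[F]_(m, d)) : 'M[F]_d := kermx (B *m S^T).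

Lemma sub_sperp m p (A : 'M[F]_(m, d)) (C : 'M[F]_(p, d)) :
  (A <= sperp C)%MS = (A *m B *m C^T == 0).
Proof. by rewrite sub_kermx mulmxA. Qed.

Lemma sub_sperp_col m p1 p2 (A : 'M[F]_(m, d)) (C1 : 'M[F]_(p1, d)) (C2 : 'M[F]_(p2, d)) :
  (A <= sperp (col_mx C1 C2))%MS = (A <= sperp C1)%MS && (A <= sperp C2)%MS.
Proof. by rewrite !sub_sperp tr_col_mx mul_mx_row row_mx_eq0. Qed.

Lemma mxrank_sperp m (S : 'M[F]_(m, d)) : \rank (sperp S) = (d - \rank S)%N.
Proof. by rewrite mxrank_ker mxrank_unit_mull // mxrank_tr. Qed.

Lemma sperp_sym m p (A : 'M[F]_(m, d)) (C : 'M[F]_(p, d)) :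
  (A <= sperp C)%MS = (C <= sperp A)%MS.
Proof.
have skew : C *m B *m A^T = - (A *m B *m C^T)^T.
  apply/matrixP => i j; rewrite [RHS]mxE [in RHS]mxE !omega_rows.
  exact: omega_skew.
by rewrite !sub_sperp skew oppr_eq0 trmx_eq0.
Qed.

Lemma sperp_row (v : 'rV[F]_d) : (v <= sperp v)%MS.
Proof. by rewrite sub_sperp; apply/eqP/matrixP => i j; rewrite !ord1 [RHS]mxE; exact: alt. Qed.

Lemma isotropic_extend s (v : 'rV[F]_d) (S : 'M[F]_(s, d)) :
  (S <= sperp S)%MS -> (v <= sperp S)%MS -> (col_mx v S <= sperp (col_mx v S))%MS.
Proof.
move=> isoS vS; rewrite sub_sperp_col !col_mx_sub sperp_row isoS vS.
by rewrite -sperp_sym vS.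
Qed.

(* If the isotropic S (dim s < n) is transverse to the Lagrangian U, then
   its orthogonal is not contained in S + U: otherwise, by the modular law,
   S^perp = S + (U :&: S^perp) with U :&: S^perp orthogonal to S + U, which
   is too small by a dimension count. *)
Lemma sperp_not_sub n s (S : 'M[F]_(s, d)) (U : 'M[F]_(n, d)) :
  n.*2 = d -> (s < n)%N -> \rank S = s -> (S <= sperp S)%MS -> (U <= sperp U)%MS ->
  \rank (S + U)%MS = (s + n)%N -> ~~ (sperp S <= S + U)%MS.
Proof.
move=> dim_d lt_sn rS isoS isoU rSU; apply/negP => perp_sub.
have perp_mod : (sperp S <= S + (U :&: sperp S))%MS.
  by rewrite (matrix_modl U isoS) sub_capmx perp_sub submx_refl.
have cap_perp : (U :&: sperp S <= sperp (col_mx S U))%MS.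
  by rewrite sub_sperp_col capmxSr (submx_trans (capmxSl _ _) isoU).
have := leq_trans (mxrankS perp_mod) (mxrank_adds_leqif _ _).1.
rewrite rS mxrank_sperp => le_dim.
have := leq_trans le_dim (leq_add (leqnn s) (mxrankS cap_perp)).
rewrite (mxrank_sperp (col_mx S U)) -addsmxE rSU; lia.
Qed.

Lemma common_complement_mx n (L M : 'M[F]_(n, d)) :
  n.*2 = d -> (L <= sperp L)%MS -> (M <= sperp M)%MS -> \rank L = n -> \rank M = n ->
  forall s, (s <= n)%N -> exists S : 'M[F]_(s, d),
  [/\ \rank S = s, (S <= sperp S)%MS,
      \rank (S + L)%MS = (s + n)%N & \rank (S + M)%MS = (s + n)%N].
Proof.
move=> dim_d isoL isoM rL rM; elim=> [|s IHs] lt_sn.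
  by exists 0; rewrite mxrank0 !adds0mx rL rM sub0mx.
have [S [rS isoS rSL rSM]] := IHs (ltnW lt_sn).
have [v [vS vL vM]] := avoid_two_subspaces
  (sperp_not_sub dim_d lt_sn rS isoS isoL rSL) (sperp_not_sub dim_d lt_sn rS isoS isoM rSM).
have rank_ext k (U : 'M[F]_(k, d)) : ~~ (v <= S + U)%MS ->
    \rank (col_mx v S + U)%MS = (\rank (S + U)%MS).+1.
  by move=> vSU; rewrite -(adds_eqmx (addsmxE v S) (eqmx_refl U)) -addsmxA mxrank_adds_row.
exists (col_mx v S); split.
- have -> : \rank (col_mx v S) = \rank (v + S)%MS by rewrite addsmxE.
  rewrite mxrank_adds_row ?rS //.
  by apply: contraNN vL => /submx_trans; apply; apply: addsmxSl.
- exact: isotropic_extend.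
- by rewrite rank_ext // rSL.
- by rewrite rank_ext // rSM.
Qed.

End CommonTransversal.

Section OrientedTransversal.
Local Set Implicit Arguments.
Local Unset Strict Implicit.
Context {F : finFieldType} {d : nat}.
Variable B : 'M[F]_d.
Hypothesis B_sympl : symplectic B.

(* Any scalar can be made a square by a change of orientation, i.e. by the
   determinant of an invertible matrix (in positive dimension). *)
Lemma det_twist_square n (x : F) : (n = 0%N -> x = 1) ->
  exists D : 'M[F]_n, D \in unitmx /\ sq (\det D * x).
Proof.
move=> x1; have [->|x0] := eqVneq x 0.
  by exists 1%:M; split; [exact: unitmx1 | exists 0; rewrite !mulr0].
case: (posnP n) => [n0|n_gt0].
  by exists 1%:M; split; [exact: unitmx1 | exists 1; rewrite det1 x1 ?(eqP n0) // !mulr1].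
pose D : 'M[F]_n := diag_mx (\row_(i < n) if (i : nat) == 0%N then x^-1 else 1).
have detD : \det D = x^-1.
  rewrite det_diag (bigD1 (Ordinal n_gt0)) //= mxE eqxx big1 ?mulr1 // => i i0.
  by rewrite mxE ifN //; apply: contra i0 => /eqP i_0; apply/eqP/val_inj.
exists D; split; first by rewrite unitmxE detD unitfE invr_eq0.
by exists 1; rewrite detD mulr1 mulVf.
Qed.

Lemma gen_posE n (M L : n.-tuple 'rV[F]_d) :
  gen_pos M L = (\rank (lagmx M + lagmx L)%MS == d).
Proof. by rewrite /gen_pos /row_full addsmxE. Qed.

Lemma olag_isotropic n (L : n.-tuple 'rV[F]_d) :
  is_olag B L -> (lagmx L <= sperp B (lagmx L))%MS.
Proof. by move=> hL; rewrite sub_sperp -[_ *m _ *m _]/(gram B L L) gram_olag. Qed.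

Lemma common_transversal n (L M : n.-tuple 'rV[F]_d) (phi : 'M[F]_(n, d) -> F) :
  is_olag B L -> is_olag B M ->
  (forall D X, phi (D *m X) = \det D * phi X) -> (n = 0%N -> forall X, phi X = 1) ->
  exists N : n.-tuple 'rV[F]_d,
    [/\ is_olag B N, gen_pos N L, gen_pos M N & sq (phi (lagmx N))].
Proof.
case: B_sympl => alt B_unit hL hM phiM phi0.
have [dim_d freeL _] := hL; have [_ freeM _] := hM.
have [X [rX isoX rXL rXM]] := common_complement_mx alt B_unit dim_d
  (olag_isotropic hL) (olag_isotropic hM) (eqP freeL) (eqP freeM) (leqnn n).
have [D [D_unit sq_phi]] := det_twist_square (fun n0 => phi0 n0 X).
pose N := [tuple row i (D *m X) | i < n].
have lagN : lagmx N = D *m X.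
  by apply/row_matrixP => i; rewrite lagmx_row tnth_mktuple.
have eqNX : (lagmx N :=: X)%MS by rewrite lagN; apply: eqmxMfull; rewrite row_full_unit.
exists N; split; last by rewrite lagN phiM.
- split => //; first by rewrite /row_free eqNX rX.
  move: isoX; rewrite sub_sperp => /eqP isoX i j.
  rewrite -!lagmx_row -omega_rows lagN trmx_mul !mulmxA -(mulmxA D X B).
  by rewrite -(mulmxA D) isoX mulmx0 mul0mx mxE.
- by rewrite gen_posE (adds_eqmx eqNX (eqmx_refl _)) rXL addnn dim_d.
- by rewrite gen_posE addsmxC (adds_eqmx eqNX (eqmx_refl _)) rXM addnn dim_d.
Qed.

Lemma det_empty n (A : 'M[F]_n) : n = 0%N -> \det A = 1.
Proof. by move=> n0; move: A; rewrite n0 => A; exact: det_mx00. Qed.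

Lemma common_transversal_sq_left n (L M : n.-tuple 'rV[F]_d) :
  is_olag B L -> is_olag B M -> exists N : n.-tuple 'rV[F]_d,
    [/\ is_olag B N, gen_pos N L, gen_pos M N & sq (\det (gram B L N))].
Proof.
move=> hL hM; apply: (common_transversal (phi := fun X => \det (lagmx L *m B *m X^T))) => //.
- by move=> D X; rewrite trmx_mul mulmxA det_mulmx det_tr mulrC.
- by move=> n0 X; apply: det_empty.
Qed.

Lemma common_transversal_sq_right n (L M : n.-tuple 'rV[F]_d) :
  is_olag B L -> is_olag B M -> exists N : n.-tuple 'rV[F]_d,
    [/\ is_olag B N, gen_pos N L, gen_pos M N & sq (\det (gram B N M))].
Proof.
move=> hL hM; apply: (common_transversal (phi := fun X => \det (X *m B *m (lagmx M)^T))) => //.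
- by move=> D X; rewrite -!mulmxA det_mulmx.
- by move=> n0 X; apply: det_empty.
Qed.

End OrientedTransversal.

Theorem mainTheorem9 (F : finFieldType) (hchar : (2%:R : F) != 0)
  (psi : F -> algC) (psi0 : psi 0 = 1)
  (psiD : forall a b, psi (a + b) = psi a * psi b)
  (psi_nt : exists a, psi a != 1)
  (d1 d2 n1 n2 : nat) (B1 : 'M[F]_d1) (B2 : 'M[F]_d2)
  (hB1 : symplectic B1) (hB2 : symplectic B2)
  (T1 : n1.-tuple 'rV[F]_d1 -> n1.-tuple 'rV[F]_d1 ->
        (heis F d1 -> algC) -> heis F d1 -> algC)
  (T2 : n2.-tuple 'rV[F]_d2 -> n2.-tuple 'rV[F]_d2 ->
        (heis F d2 -> algC) -> heis F d2 -> algC)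
  (T12 : (n1 + n2).-tuple 'rV[F]_(d1 + d2) -> (n1 + n2).-tuple 'rV[F]_(d1 + d2) ->
        (heis F (d1 + d2) -> algC) -> heis F (d1 + d2) -> algC)
  (hT1 : canonical_triv B1 psi T1) (hT2 : canonical_triv B2 psi T2)
  (hT12 : canonical_triv (prod_form B1 B2) psi T12)
  (L1 M1 : n1.-tuple 'rV[F]_d1) (L2 M2 : n2.-tuple 'rV[F]_d2)
  (hL1 : is_olag B1 L1) (hM1 : is_olag B1 M1)
  (hL2 : is_olag B2 L2) (hM2 : is_olag B2 M2)
  (g : heis F (d1 + d2) -> algC)
  (hg : Hspace (prod_form B1 B2) psi (smap L1 L2) g) :
  tensT (T1 M1 L1) (T2 M2 L2) (rstar g) =
  rstar (T12 (smap M1 M2) (smap L1 L2) g).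
Proof.
have [N1 [hN1 gN1L1 gM1N1 sq1]] := common_transversal_sq_left hB1 hL1 hM1.
have [N2 [hN2 gN2L2 gM2N2 sq2]] := common_transversal_sq_right hB2 hL2 hM2.
rewrite (T_factor hT12 (olag_smap hM1 hM2) (olag_smap hN1 hN2) (olag_smap hL1 hL2)
  (gen_pos_smap gM1N1 gM2N2) (gen_pos_smap gN1L1 gN2L2) hg).
rewrite T0_smap; last by right.
rewrite T0_smap; last by left.
rewrite -tensT_T0_comp; apply: tensT_rstar_ext hg _ _ _ => [f hf|f hf|c f].
- exact: T_factor hT1 hM1 hN1 hL1 gM1N1 gN1L1 hf.
- exact: T_factor hT2 hM2 hN2 hL2 gM2N2 gN2L2 hf.
- by rewrite !T0_scale.
Qed.
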